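(* Let $q\in\mathbb{C}$ with $0<|q|<1$ and $l,m,n,u\in\mathbb{N}$. Then \[ \sum_{k=0}^\infty\frac{q^{k^2} (q)_{l+m+n-k}} {(q)_k (q)_{l-k}(q)_{m-k}(q)_{n-k} (q)_{u+k}} =\sum_{k=-\infty}^\infty\frac{(-1)^k q^{(5k^2-k)/2} (q)_{l+m}(q)_{l+n}(q)_{m+n}(q)_{u-1}} {(q)_{l-k}(q)_{m-k}(q)_{n-k}(q)_{u-k}(q)_{l+k}(q)_{m+k}(q)_{n+k}(q)_{u+k-1}}, \] and \[ \sum_{k=0}^\infty\frac{q^{k^2+k} (q)_{l+m+n-k}} {(q)_k (q)_{l-k}(q)_{m-k}(q)_{n-k}(q)_{u+k}} =\sum_{k=-\infty}^\infty\frac{(-1)^k q^{(5k^2-3k)/2} (q)_{l+m}(q)_{m+n}(q)_{l+n}(q)_{u-1}} {(q)_{l-k}(q)_{m-k}(q)_{n-k}(q)_{u-k}(q)_{l+k}(q)_{m+k}(q)_{n+k}(q)_{u+k-1}}. \]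
   Context: For an integer $n$, $(q)_n=(q;q)_n$ with $(q)_0=1$, $(q)_n=(1-q)(1-q^2)\cdots(1-q^n)$ for $n\ge1$, and $(q)_n=[(1-q^{0})\cdots]$ interpreted via $(a)_n=[(1-aq^{-1})(1-aq^{-2})\cdots(1-aq^{n})]^{-1}$ for $n\le-1$ with $a=q$; in particular $(q)_{-1}=1/(1-q^{0})$ is not used as a value except through the convention $1/(q)_n=0$ for $n<0$. *)

(* q lives in C := R[i] = complex R for a real closed field R
   (for R the real numbers this is the field of complex numbers). *)
From HB Require Import structures.
From mathcomp Require Import all_boot all_order all_algebra.
From mathcomp Require Export complex.
Set Implicit Arguments. Unset Strict Implicit. Unset Printing Implicit Defensive.
Import Order.TTheory GRing.Theory Num.Theory.
Local Open Scope ring_scope.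

Section QPoch.
Variable (C : comUnitRingType) (q : C).

Definition qfac (n : nat) : C := \prod_(1 <= j < n.+1) (1 - q ^+ j).

(* 1/(q)_z for an integer z, with the convention 1/(q)_z = 0 for z < 0 *)
Definition rqfac (z : int) : C :=
  match z with Posz n => (qfac n)^-1 | Negz _ => 0 end.

(* The factor (q)_{u-1} / ((q)_{u-k} (q)_{u+k-1}).
   For u >= 1 all indices of (q) in the numerator are >= 0 and the
   denominators are read with the convention 1/(q)_z = 0 for z < 0.
   For u = 0 the numerator (q)_{-1} = 1/(1-q^0) has a pole, and exactly one of
   (q)_{-k}, (q)_{k-1} is a (q)_{-n} with n >= 1, given by the general definition
   (q)_{-n} = 1/[(1-q^0)(1-q^{-1})...(1-q^{-(n-1)})]; the common factor (1-q^0)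
   cancels formally, leaving
     (q)_{-1}/(q)_{-n} = (1-q^{-1})...(1-q^{-(n-1)}),
   divided by the remaining (q)_{n-1}. *)
Definition negpoch_ratio (n : nat) : C :=
  \prod_(1 <= j < n) (1 - (q ^+ j)^-1).

Definition ufactor (u : nat) (k : int) : C :=
  if (0 < u)%N then qfac u.-1 * rqfac (u%:Z - k) * rqfac (u%:Z + k - 1)
  else if (0 < k) then negpoch_ratio `|k|%N * (qfac `|k - 1|%N)^-1
  else negpoch_ratio `|1 - k|%N * (qfac `|k|%N)^-1.

Definition lhs_term (e l m n u k : nat) : C :=
  q ^+ (k * k + e * k) * qfac (l + m + n - k)
  * rqfac k%:Z * rqfac (l%:Z - k%:Z) * rqfac (m%:Z - k%:Z) * rqfac (n%:Z - k%:Z)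
  * rqfac (u + k)%:Z.

Definition rhs_term (e l m n u : nat) (k : int) : C :=
  (-1) ^ k * q ^ ((5 * k * k - (1 + 2 * e%:Z) * k) %/ 2)%Z
  * qfac (l + m) * qfac (l + n) * qfac (m + n)
  * rqfac (l%:Z - k) * rqfac (m%:Z - k) * rqfac (n%:Z - k)
  * rqfac (l%:Z + k) * rqfac (m%:Z + k) * rqfac (n%:Z + k)
  * ufactor u k.

End QPoch.

From HB Require Import structures.
From mathcomp Require Import all_boot all_order all_algebra.
From mathcomp Require Import complex.
From mathcomp Require Import ring zify.
Import Order.TTheory GRing.Theory Num.Theory.
Local Open Scope ring_scope.

(* Write B_k for the coefficient of the factor U_u(k) = (q)_{u-1}/((q)_{u-k}(q)_{u+k-1})
   in the right-hand summand and A_j for the coefficient of 1/(q)_{u+j} in the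
   left-hand summand.  First, U_u(k) = sum_j c_{k,j}/(q)_{u+j} with
   c_{k,j} = (-1)^j q^(C(j+1,2) - (k-1)(k+j)) (q^(k-j); q)_{2j} / (q)_j: both sides
   satisfy (1 - q^(u+k)) X(k+1) = (1 - q^(u-k)) X(k), are invariant under k -> 1 - k
   and agree at k = 1; for the sum the recurrence telescopes in j.  The theorem thus
   reduces to S_j := sum_k B_k c_{k,j} = A_j.  Both sides vanish for j > mu = min(l,m,n),
   agree at j = mu, and obey the same recurrence a_j X_{j+1} = b_j X_j: for A_j this is
   a ratio of q-factorials, for S_j it follows by summing over k a Wilf-Zeilberger-type
   identity symmetrised under k -> -k. *)

Ltac field_nz := field; do ?[apply/andP; split]; rewrite ?oner_neq0 //.

Lemma sum_window_opp {V : zmodType} (M : nat) (f : int -> V) :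
  \sum_(i < M.*2.+1) f (- (i%:Z - M%:Z)) = \sum_(i < M.*2.+1) f (i%:Z - M%:Z).
Proof.
rewrite (reindex_inj rev_ord_inj); apply: eq_bigr => i _; congr f.
by case: i => i /= i_lt; lia.
Qed.

Lemma sum_window_telescope {V : zmodType} (M : nat) (f : int -> V) :
  \sum_(i < M.*2.+1) (f (i%:Z - M%:Z + 1) - f (i%:Z - M%:Z)) = f (M%:Z + 1) - f (- M%:Z).
Proof.
rewrite -(big_mkord xpredT (fun i => f (i%:Z - M%:Z + 1) - f (i%:Z - M%:Z))).
rewrite (telescope_sumr_eq (fun i : nat => f (i%:Z - M%:Z))) //.
  by congr (f _ - f _); lia.
by move=> i _; congr (f _ - _); lia.
Qed.

Section QFactorial.
Variables (C : fieldType) (q : C).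
Hypothesis q_neq0 : q != 0.
Hypothesis qX_neq1 : forall n : nat, (0 < n)%N -> q ^+ n != 1.

Lemma qfac0 : qfac q 0 = 1.
Proof. by rewrite /qfac big_geq. Qed.

Lemma qfacS n : qfac q n.+1 = qfac q n * (1 - q ^+ n.+1).
Proof. by rewrite /qfac big_nat_recr. Qed.

Lemma subr1qX_neq0 n : (0 < n)%N -> 1 - q ^+ n != 0.
Proof. by move=> n_gt0; rewrite subr_eq0 eq_sym qX_neq1. Qed.

Lemma qfac_neq0 n : qfac q n != 0.
Proof.
elim: n => [|n IHn]; first by rewrite qfac0 oner_neq0.
by rewrite qfacS mulf_neq0 // subr1qX_neq0.
Qed.

Lemma rqfac_nat (p : nat) : rqfac q p%:Z = (qfac q p)^-1.
Proof. by []. Qed.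

Lemma rqfac_lt0 (z : int) : z < 0 -> rqfac q z = 0.
Proof. by case: z. Qed.

Lemma rqfacB1 (z : int) : rqfac q (z - 1) = rqfac q z * (1 - q ^ z).
Proof.
case: z => [[|n]|n].
- by rewrite /= expr0z subrr mulr0.
- have -> : n.+1%:Z - 1 = n by lia.
  by rewrite /= qfacS invfM -mulrA mulVf ?mulr1 ?subr1qX_neq0.
- have -> : Negz n - 1 = Negz n.+1 by rewrite !NegzE; lia.
  by rewrite /= mul0r.
Qed.

Lemma qX_neq0 n : q ^+ n != 0. Proof. exact: expf_neq0. Qed.

Lemma qz_neq0 (k : int) : q ^ k != 0. Proof. exact: expfz_neq0. Qed.

Lemma subr1qXS_neq0 n : 1 - q ^+ n.+1 != 0.
Proof. exact: subr1qX_neq0. Qed.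

Lemma subr1q_neq0 : 1 - q != 0.
Proof. by have := subr1qXS_neq0 0; rewrite expr1. Qed.

Lemma qzX_neq0 (k : int) n : (q ^ k) ^+ n != 0.
Proof. exact/expf_neq0/qz_neq0. Qed.

Hint Resolve qX_neq0 qz_neq0 qzX_neq0 qfac_neq0 subr1q_neq0 subr1qXS_neq0 : core.

Lemma qzD (a b : int) : q ^ (a + b) = q ^ a * q ^ b.
Proof. exact: expfzDr. Qed.

Lemma qzN (a : int) : q ^ (- a) = (q ^ a)^-1.
Proof. by rewrite invr_expz. Qed.

Lemma qzMn (k : int) (n : nat) : q ^ (k * n%:Z) = (q ^ k) ^+ n.
Proof. by rewrite -exprz_exp. Qed.

Definition cpoch (j : nat) (x : C) : C := \prod_(i < j.*2) (1 - x * q ^+ i / q ^+ j).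

Lemma cpoch0 x : cpoch 0 x = 1.
Proof. by rewrite /cpoch big_ord0. Qed.

Lemma cpochS j x :
  cpoch j.+1 x = (1 - x / q ^+ j.+1) * (1 - x * q ^+ j) * cpoch j x.
Proof.
rewrite /cpoch doubleS big_ord_recl big_ord_recr /= expr0 mulr1.
have -> : \prod_(i < j.*2) (1 - x * q ^+ bump 0 i / q ^+ j.+1)
          = \prod_(i < j.*2) (1 - x * q ^+ i / q ^+ j).
  by apply: eq_bigr => i _; rewrite /bump add1n !exprS; field_nz.
rewrite /bump add1n -addnn -addSn exprD.
field_nz.
Qed.

Lemma cpochSqx j x :
  cpoch j.+1 (q * x) = (1 - x * q ^+ j) * (1 - x * q ^+ j.+1) * cpoch j x.
Proof.
rewrite /cpoch doubleS !big_ord_recr /=.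
have -> : \prod_(i < j.*2) (1 - q * x * q ^+ i / q ^+ j.+1)
          = \prod_(i < j.*2) (1 - x * q ^+ i / q ^+ j).
  by apply: eq_bigr => i _; rewrite exprS; field_nz.
rewrite -addnn !exprS !exprD.
field_nz.
Qed.

Lemma cpoch_reflect j x : x != 0 -> cpoch j (q / x) = (q / x ^+ 2) ^+ j * cpoch j x.
Proof.
move=> x_neq0; elim: j => [|j IHj]; first by rewrite !cpoch0 expr0 mulr1.
rewrite !cpochS IHj !exprS; field_nz.
Qed.

Lemma cpoch_qz_eq0 j (k : int) : - (j%:Z) < k <= j%:Z -> cpoch j (q ^ k) = 0.
Proof.
move=> /andP[k_gt k_le].
have i_lt : (`|j%:Z - k| < j.*2)%N by rewrite -ltz_nat; lia.
rewrite /cpoch (bigD1 (Ordinal i_lt)) //= mulrC; apply/eqP.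
rewrite mulf_eq0 subr_eq0 eq_sym !exprnP invr_expz -!expfzDr //.
have -> : k + `|j%:Z - k|%N - j%:Z = 0 by lia.
by rewrite expr0z eqxx orbT.
Qed.

Lemma cpoch_qX j : cpoch j (q ^+ j.+1) = qfac q j.*2.
Proof.
rewrite /cpoch /qfac big_add1 big_mkord /=; apply: eq_bigr => i _.
by rewrite !exprS; field_nz.
Qed.

Definition uweight (k : int) (j : nat) : C :=
  (-1) ^+ j * q ^+ 'C(j.+1, 2) / qfac q j * q ^ (- ((k - 1) * (k + j%:Z))).

Definition ucoef (k : int) (j : nat) : C := uweight k j * cpoch j (q ^ k).

Lemma uweightSk (k : int) (j : nat) : uweight (k + 1) j = uweight k j / (q ^ k) ^+ 2 / q ^+ j.
Proof.
rewrite /uweight.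
have -> : - ((k + 1 - 1) * (k + 1 + j%:Z)) = - ((k - 1) * (k + j%:Z)) - k - k - j%:Z.
  by ring.
rewrite !qzD -!invr_expz -exprnP; field_nz.
Qed.

Lemma uweightSj (k : int) (j : nat) :
  uweight k j.+1 = - uweight k j * q ^+ j.+1 / (1 - q ^+ j.+1) / q ^ k * q.
Proof.
rewrite /uweight.
have -> : - ((k - 1) * (k + j.+1%:Z)) = - ((k - 1) * (k + j%:Z)) - k + 1.
  by rewrite -addn1 PoszD; ring.
rewrite qfacS binS bin1 !qzD -!invr_expz expr1z exprD exprS.
field_nz.
Qed.

Lemma ucoef_reflect (k : int) (j : nat) : ucoef (1 - k) j = ucoef k j.
Proof.
rewrite /ucoef /uweight (_ : q ^ (1 - k) = q / q ^ k); last first.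
  by rewrite qzD expr1z invr_expz.
rewrite cpoch_reflect //.
have -> : - ((1 - k - 1) * (1 - k + j%:Z)) = - ((k - 1) * (k + j%:Z)) + k * j%:Z + k * j%:Z - j%:Z.
  by ring.
rewrite !qzD !qzMn !qzN -exprnP expr2 exprMn exprVn exprMn.
field_nz.
Qed.

Lemma ucoef_eq0 j (k : int) : - (j%:Z) < k <= j%:Z -> ucoef k j = 0.
Proof. by move=> k_in; rewrite /ucoef cpoch_qz_eq0 ?mulr0. Qed.

Lemma ucoef1 j : ucoef 1 j = (j == 0)%:R.
Proof.
case: j => [|j]; last by rewrite ucoef_eq0 //; apply/andP; split; lia.
by rewrite /ucoef /uweight cpoch0 qfac0 subrr mul0r oppr0 expr0z bin_small // !expr0 invr1 !mulr1.
Qed.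

Definition udiff (k : int) (j : nat) : C :=
  (q ^ k * ucoef (k + 1) j - ucoef k j / q ^ k) / q ^+ j.

Lemma udiff0 (k : int) : udiff k 0 = 0.
Proof. by rewrite /udiff /ucoef uweightSk !cpoch0; field_nz. Qed.

Lemma ucoef_telescope (k : int) (j : nat) : ucoef (k + 1) j - ucoef k j = udiff k j - udiff k j.+1.
Proof.
rewrite /udiff /ucoef !uweightSk !uweightSj qzD expr1z [q ^ k * q]mulrC.
(* cpoch j (q x) and cpoch j x are both multiples of cpoch j.-1 x, not of each other. *)
case: j => [|j]; rewrite !cpochSqx !cpochS ?cpoch0.
- field_nz.
- have := subr1qXS_neq0 j.+1; have := subr1qXS_neq0 j; rewrite !exprS => ? ?.
  field_nz.
Qed.

Section Expansion.
Variable u : nat.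

Lemma ucoef_term_telescope (k : int) (j : nat) :
  ((1 - q ^+ u * q ^ k) * ucoef (k + 1) j - (1 - q ^+ u / q ^ k) * ucoef k j)
    * rqfac q (u + j)%:Z
  = udiff k j * rqfac q ((u + j)%:Z - 1)
    - udiff k j.+1 * rqfac q ((u + j.+1)%:Z - 1).
Proof.
have -> : (u + j.+1)%:Z - 1 = (u + j)%:Z by lia.
have -> : udiff k j.+1 = udiff k j - (ucoef (k + 1) j - ucoef k j).
  by rewrite ucoef_telescope; ring.
rewrite rqfacB1 PoszD qzD -!exprnP /udiff; field_nz.
Qed.

Definition usum (J : nat) (k : int) : C := \sum_(j < J) ucoef k j * rqfac q (u + j)%:Z.

Lemma usum_rec (J : nat) (k : int) : - (J%:Z) < k -> k + 1 <= J%:Z ->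
  (1 - q ^+ u * q ^ k) * usum J (k + 1) = (1 - q ^+ u / q ^ k) * usum J k.
Proof.
move=> k_gt k_lt; apply/eqP; rewrite -subr_eq0; apply/eqP.
pose f j := udiff k j * rqfac q ((u + j)%:Z - 1).
rewrite /usum !mulr_sumr -sumrB (eq_bigr (fun j : 'I_J => f j - f j.+1)); last first.
  by move=> j _; rewrite /f -ucoef_term_telescope; ring.
rewrite -(big_mkord xpredT (fun j => f j - f j.+1)).
rewrite (telescope_sumr_eq (fun j => - f j)) //; last by move=> j _; ring.
rewrite /f udiff0 /udiff !ucoef_eq0; try by apply/andP; split; lia.
by rewrite !(mulr0, mul0r, subrr, oppr0).
Qed.

Lemma usum_reflect (J : nat) (k : int) : usum J (1 - k) = usum J k.
Proof. by apply: eq_bigr => j _; rewrite ucoef_reflect. Qed.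

Lemma usum1 (J : nat) : (0 < J)%N -> usum J 1 = rqfac q u%:Z.
Proof.
case: J => [//|J] _; rewrite /usum big_ord_recl ucoef1 /= mul1r addn0 big1 ?addr0 //.
by move=> j _; rewrite ucoef1 mul0r.
Qed.

Lemma ufactor_rec (k : int) : 0 < k ->
  (1 - q ^+ u * q ^ k) * ufactor q u (k + 1) = (1 - q ^+ u / q ^ k) * ufactor q u k.
Proof.
rewrite /ufactor; case: u => [|v] /= k_gt0.
  case: k k_gt0 => [[|n]|n] //= _.
  have -> : (n.+1 + 1 - 1 = n.+1)%N by lia.
  have -> : (n.+1 + 1 = n.+2)%N by lia.
  have -> : (n.+1 - 1 = n)%N by lia.
  rewrite /negpoch_ratio big_nat_recr //= qfacS expr0 mul1r -exprnP; field_nz.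
have -> : v.+1%:Z - (k + 1) = v.+1%:Z - k - 1 by ring.
have -> : v.+1%:Z + (k + 1) - 1 = v.+1%:Z + k by ring.
rewrite (rqfacB1 (v.+1%:Z + k)) !rqfacB1 !qzD qzN -exprnP; field_nz.
Qed.

Lemma ufactor_reflect (k : int) : ufactor q u (1 - k) = ufactor q u k.
Proof.
rewrite /ufactor; case: ifP => _.
  have -> : u%:Z - (1 - k) = u%:Z + k - 1 by ring.
  have -> : u%:Z + (1 - k) - 1 = u%:Z - k by ring.
  by rewrite -!mulrA [rqfac q (u%:Z + k - 1) * _]mulrC.
have -> : 1 - (1 - k) = k by ring.
have -> : `|(1 - k - 1)%R|%N = `|k|%N by lia.
case: (ltrP 0 k) => k_gt0.
  have -> : (0 < 1 - k) = false by lia.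
  by have -> : `|(1 - k)%R|%N = `|(k - 1)%R|%N by lia.
by have -> : (0 < 1 - k) = true by lia.
Qed.

Lemma ufactor1 : ufactor q u 1 = rqfac q u%:Z.
Proof.
rewrite /ufactor; case: u => [|v] /=.
  by rewrite /negpoch_ratio big_geq // qfac0 invr1 mulr1.
have -> : (v.+1 - 1 = v)%N by lia.
have -> : (v.+1 + 1 - 1 = v.+1)%N by lia.
by rewrite mulfV // mul1r.
Qed.

Lemma ufactor_usum_pos (J n : nat) : (n < J)%N -> ufactor q u n.+1%:Z = usum J n.+1%:Z.
Proof.
elim: n => [|n IHn] n_lt; first by rewrite ufactor1 usum1 //; lia.
have -> : n.+2%:Z = n.+1%:Z + 1 by lia.
have c_neq0 : 1 - q ^+ u * q ^ n.+1%:Z != 0 by rewrite -exprnP -exprD addnS.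
apply: (mulfI c_neq0); rewrite ufactor_rec // usum_rec; try lia.
by rewrite IHn //; lia.
Qed.

Lemma ufactor_usum (J : nat) (k : int) : (`|k| < J)%N -> ufactor q u k = usum J k.
Proof.
move=> k_lt; case: (ltrP 0 k) => [k_gt0 | k_le0].
  have [n k_eq] : exists n : nat, k = n.+1%:Z by exists `|k|.-1; lia.
  by rewrite k_eq (ufactor_usum_pos J) //; lia.
rewrite -ufactor_reflect -usum_reflect.
have [n k_eq] : exists n : nat, 1 - k = n.+1%:Z by exists `|k|%N; lia.
by rewrite k_eq (ufactor_usum_pos J) //; lia.
Qed.

End Expansion.

Lemma signzN (k : int) : (-1 : C) ^ (- k) = (-1) ^ k.
Proof.
have sq1 : (-1 : C) ^ k * (-1) ^ k = 1 by rewrite -expfzMl mulrNN mulr1 exp1rz.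
have s_neq0 : (-1 : C) ^ k != 0 by rewrite expfz_neq0 // oppr_eq0 oner_neq0.
by rewrite -invr_expz; apply: (mulfI s_neq0); rewrite sq1 mulfV.
Qed.

Lemma signzS (k : int) : (-1 : C) ^ (k + 1) = - (-1) ^ k.
Proof. by rewrite expfzDr ?oppr_eq0 ?oner_neq0 // expr1z mulrN1. Qed.

Definition pent (k : int) : int := ((5 * k * (k - 1)) %/ 2)%Z.

Lemma qz_pentS (k : int) : q ^ pent (k + 1) = q ^ pent k * (q ^ k) ^+ 5.
Proof.
rewrite /pent -qzMn -qzD; congr (q ^ _).
have -> : 5 * (k + 1) * (k + 1 - 1) = k * 5%:Z * 2 + 5 * k * (k - 1) by ring.
by rewrite divzMDl // addrC.
Qed.

Lemma qz_rhs_exp (e : nat) (k : int) :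
  q ^ ((5 * k * k - (1 + 2 * e%:Z) * k) %/ 2)%Z = q ^ pent k * (q ^ k) ^+ 2 / (q ^ k) ^+ e.
Proof.
have -> : 5 * k * k - (1 + 2 * e%:Z) * k = (k * 2%:Z - k * e%:Z) * 2 + 5 * k * (k - 1) by ring.
rewrite divzMDl // !qzD qzN !qzMn; ring.
Qed.

Lemma qz_rhs_expN (e : nat) (k : int) :
  q ^ ((5 * (- k) * (- k) - (1 + 2 * e%:Z) * (- k)) %/ 2)%Z
  = q ^ pent k * (q ^ k) ^+ 3 * (q ^ k) ^+ e.
Proof.
have -> : 5 * (- k) * (- k) - (1 + 2 * e%:Z) * (- k)
          = (k * 3%:Z + k * e%:Z) * 2 + 5 * k * (k - 1) by ring.
rewrite divzMDl // !qzD !qzMn; ring.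
Qed.

Section CoefficientIdentity.
Variables (e l m n : nat).
Hypothesis e_le1 : (e <= 1)%N.

Definition rhs_weight (k : int) : C :=
  (-1) ^ k * q ^ ((5 * k * k - (1 + 2 * e%:Z) * k) %/ 2)%Z
  * qfac q (l + m) * qfac q (l + n) * qfac q (m + n)
  * rqfac q (l%:Z - k) * rqfac q (m%:Z - k) * rqfac q (n%:Z - k)
  * rqfac q (l%:Z + k) * rqfac q (m%:Z + k) * rqfac q (n%:Z + k).

Lemma rhs_termE (u : nat) (k : int) : rhs_term q e l m n u k = rhs_weight k * ufactor q u k.
Proof. by []. Qed.

Definition ratio_den (j : nat) : C := (1 - q ^+ j.+1) * (1 - q ^+ (l + m + n) / q ^+ j).

Definition ratio_num (j : nat) : C :=
  q ^+ (j.*2 + 1 + e) * (1 - q ^+ l / q ^+ j) * (1 - q ^+ m / q ^+ j) * (1 - q ^+ n / q ^+ j).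

Definition wzcert (j : nat) (k : int) : C :=
  q * (q ^+ j.+1) ^+ e * qfac q (l + m) * qfac q (l + n) * qfac q (m + n)
  * (-1) ^ k * q ^ pent k
  * rqfac q (l%:Z - k) * rqfac q (l%:Z + k - 1)
  * rqfac q (m%:Z - k) * rqfac q (m%:Z + k - 1)
  * rqfac q (n%:Z - k) * rqfac q (n%:Z + k - 1) * ucoef k j.

Lemma wz_pair (j : nat) (k : int) :
  ratio_den j * (rhs_weight k * ucoef k j.+1 + rhs_weight (- k) * ucoef (k + 1) j.+1)
  - ratio_num j * (rhs_weight k * ucoef k j + rhs_weight (- k) * ucoef (k + 1) j)
  = wzcert j (k + 1) - wzcert j k.
Proof.
rewrite /rhs_weight /wzcert !opprK.
have shiftB (p : nat) : p%:Z - (k + 1) = p%:Z - k - 1 by ring.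
have shiftD (p : nat) : p%:Z + (k + 1) - 1 = p%:Z + k by ring.
rewrite !shiftB !shiftD !rqfacB1 signzN signzS qz_rhs_exp qz_rhs_expN qz_pentS.
rewrite /ucoef !uweightSk !uweightSj qzD expr1z [q ^ k * q]mulrC.
rewrite !qzD !qzN -!exprnP /ratio_den /ratio_num -addnn !exprD.
have [-> | ->] : e = 0%N \/ e = 1%N by lia.
all: case: j => [|j]; rewrite !cpochSqx !cpochS ?cpoch0; first by field_nz.
all: have := subr1qXS_neq0 j.+1; have := subr1qXS_neq0 j; rewrite !exprS => ? ?.
all: field_nz.
Qed.

Lemma wzcert_eq0 (j : nat) (k : int) : (l < `|k|)%N -> wzcert j k = 0.
Proof.
move=> k_gt; rewrite /wzcert; have [k_ge0|k_lt0] := lerP 0 k.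
  by rewrite (rqfac_lt0 (l%:Z - k)) ?(mulr0, mul0r) //; lia.
by rewrite (rqfac_lt0 (l%:Z + k - 1)) ?(mulr0, mul0r) //; lia.
Qed.

Definition lhs_coef (j : nat) : C :=
  q ^+ (j * j + e * j) * qfac q (l + m + n - j)
  * rqfac q j%:Z * rqfac q (l%:Z - j%:Z) * rqfac q (m%:Z - j%:Z) * rqfac q (n%:Z - j%:Z).

Lemma lhs_termE (u j : nat) : lhs_term q e l m n u j = lhs_coef j * rqfac q (u + j)%:Z.
Proof. by []. Qed.

Local Notation mu := (minn l (minn m n)).

Lemma rqfac_subS (p j : nat) :
  rqfac q (p%:Z - j.+1%:Z) = rqfac q (p%:Z - j%:Z) * (1 - q ^+ p / q ^+ j).
Proof.
have -> : p%:Z - j.+1%:Z = p%:Z - j%:Z - 1 by lia.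
by rewrite rqfacB1 qzD qzN.
Qed.

Lemma lhs_coef_ratio (j : nat) : (j < mu)%N ->
  ratio_den j * lhs_coef j.+1 = ratio_num j * lhs_coef j.
Proof.
move=> j_lt; rewrite /lhs_coef /ratio_den /ratio_num !rqfac_subS.
have -> : (l + m + n - j = (l + m + n - j.+1).+1)%N by lia.
have -> : q ^+ (l + m + n) = q ^+ (l + m + n - j.+1).+1 * q ^+ j.
  by rewrite -exprD; congr (_ ^+ _); lia.
have -> : q ^+ (j.+1 * j.+1 + e * j.+1) = q ^+ (j * j + e * j) * q ^+ (j.*2 + 1 + e).
  by rewrite -exprD; congr (_ ^+ _); rewrite -addnn; nia.
have -> : rqfac q j%:Z = rqfac q j.+1%:Z * (1 - q ^+ j.+1).
  by rewrite exprnP -rqfacB1; congr (rqfac q _); lia.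
rewrite qfacS; field_nz.
Qed.

Variable M : nat.
Hypothesis l_lt_M : (l < M)%N.
(* Summing [wz_pair] over the window yields twice the recurrence for [rhs_coef]. *)
Hypothesis two_neq0 : 2%:R != 0 :> C.

Definition rhs_coef (j : nat) : C :=
  \sum_(i < M.*2.+1) rhs_weight (i%:Z - M%:Z) * ucoef (i%:Z - M%:Z) j.

Lemma rhs_coef_ratio (j : nat) : ratio_den j * rhs_coef j.+1 = ratio_num j * rhs_coef j.
Proof.
have reflect_sum p : \sum_(i < M.*2.+1) rhs_weight (- (i%:Z - M%:Z)) * ucoef (i%:Z - M%:Z + 1) p
                     = rhs_coef p.
  rewrite /rhs_coef; have /= <- := sum_window_opp M (fun k => rhs_weight k * ucoef k p).
  by apply: eq_bigr => i _; rewrite -ucoef_reflect; congr (_ * ucoef _ _); ring.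
have := sum_window_telescope M (wzcert j).
rewrite !wzcert_eq0 ?subrr; [|lia|lia].
under eq_bigr => i _ do rewrite -wz_pair.
rewrite sumrB -!mulr_sumr !big_split /= !reflect_sum -/(rhs_coef j) -/(rhs_coef j.+1).
move=> sum_eq0.
have /eqP : 2%:R * (ratio_den j * rhs_coef j.+1 - ratio_num j * rhs_coef j) = 0.
  by rewrite -sum_eq0; ring.
by rewrite mulf_eq0 (negbTE two_neq0) subr_eq0 => /eqP.
Qed.

Lemma rhs_weight_eq0 (k : int) : (mu < `|k|)%N -> rhs_weight k = 0.
Proof.
move=> k_gt; rewrite /rhs_weight.
have [p_lt|[p_lt|p_lt]] : (l < `|k|)%N \/ (m < `|k|)%N \/ (n < `|k|)%N by lia.
all: have [k_ge0|k_lt0] := lerP 0 k.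
- by rewrite (rqfac_lt0 (l%:Z - k)) ?(mulr0, mul0r) //; lia.
- by rewrite (rqfac_lt0 (l%:Z + k)) ?(mulr0, mul0r) //; lia.
- by rewrite (rqfac_lt0 (m%:Z - k)) ?(mulr0, mul0r) //; lia.
- by rewrite (rqfac_lt0 (m%:Z + k)) ?(mulr0, mul0r) //; lia.
- by rewrite (rqfac_lt0 (n%:Z - k)) ?(mulr0, mul0r) //; lia.
- by rewrite (rqfac_lt0 (n%:Z + k)) ?(mulr0, mul0r) //; lia.
Qed.

Lemma lhs_coef_eq0 (j : nat) : (mu < j)%N -> lhs_coef j = 0.
Proof.
move=> j_gt; rewrite /lhs_coef.
have [p_lt|[p_lt|p_lt]] : (l < j)%N \/ (m < j)%N \/ (n < j)%N by lia.
- by rewrite (rqfac_lt0 (l%:Z - j%:Z)) ?(mulr0, mul0r) //; lia.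
- by rewrite (rqfac_lt0 (m%:Z - j%:Z)) ?(mulr0, mul0r) //; lia.
- by rewrite (rqfac_lt0 (n%:Z - j%:Z)) ?(mulr0, mul0r) //; lia.
Qed.

Lemma rhs_weight_ucoef_eq0 (k : int) (j : nat) : (mu <= j)%N ->
  (k != - mu%:Z) || (mu < j)%N -> rhs_weight k * ucoef k j = 0.
Proof.
move=> j_ge k_ne; have [k_gt|k_le] := ltnP mu `|k|.
  by rewrite rhs_weight_eq0 ?mul0r.
by rewrite ucoef_eq0 ?mulr0 //; move: k_ne => /orP[/eqP|]; lia.
Qed.

Lemma bin2S_mul2 (p : nat) : ('C(p.+1, 2) * 2 = p.+1 * p)%N.
Proof. by elim: p => [//|p IHp]; rewrite binS bin1 mulnDl IHp; lia. Qed.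

Lemma qz_base_exp (p : nat) :
  q ^ ((5 * (- p%:Z) * (- p%:Z) - (1 + 2 * e%:Z) * (- p%:Z)) %/ 2)%Z * q ^+ 'C(p.+1, 2)
  * q ^ (- ((p.+1%:Z - 1) * (p.+1%:Z + p%:Z))) = q ^+ (p * p + e * p).
Proof.
have bin2_eq : 'C(p.+1, 2)%:Z * 2 = p.+1%:Z * p%:Z by have := bin2S_mul2 p; lia.
have -> : 5 * (- p%:Z) * (- p%:Z) - (1 + 2 * e%:Z) * (- p%:Z)
          = (2 * p%:Z * p%:Z + e%:Z * p%:Z + 'C(p.+1, 2)%:Z) * 2 by nia.
by rewrite mulzK // !exprnP -!qzD; congr (q ^ _); nia.
Qed.

Lemma rhs_weight_ucoef_base : rhs_weight (- mu%:Z) * ucoef (- mu%:Z) mu = lhs_coef mu.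
Proof.
set p := mu.
have -> : ucoef (- p%:Z) p = ucoef p.+1%:Z p by rewrite -ucoef_reflect; congr ucoef; lia.
rewrite /ucoef /uweight -exprnP cpoch_qX /rhs_weight /lhs_coef !opprK signzN.
rewrite -(qz_base_exp p) -invr_sign -exprnP -!PoszD !rqfac_nat.
have s_neq0 : (-1 : C) ^+ p != 0 by rewrite expf_neq0 // oppr_eq0 oner_neq0.
have [p_eq|[p_eq|p_eq]] : p = l \/ p = m \/ p = n by rewrite /p; lia.
- rewrite p_eq in s_neq0 *; have -> : (l + m + n - l = m + n)%N by lia.
  rewrite -addnn (addnC m l) (addnC n l); field_nz.
- rewrite p_eq in s_neq0 *; have -> : (l + m + n - m = l + n)%N by lia.
  rewrite -addnn (addnC n m); field_nz.
- rewrite p_eq in s_neq0 *; have -> : (l + m + n - n = l + m)%N by lia.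
  rewrite -addnn; field_nz.
Qed.

Lemma rhs_coef_eq0 (j : nat) : (mu < j)%N -> rhs_coef j = 0.
Proof.
move=> j_gt; rewrite /rhs_coef big1 // => i _.
by rewrite rhs_weight_ucoef_eq0 ?j_gt ?orbT //; exact: ltnW.
Qed.

Lemma rhs_coef_mu : rhs_coef mu = lhs_coef mu.
Proof.
have i0_lt : (M - mu < M.*2.+1)%N by lia.
rewrite /rhs_coef (bigD1 (Ordinal i0_lt)) //= big1 ?addr0 => [|i i_ne].
  have -> : (M - mu)%N%:Z - M%:Z = - mu%:Z by lia.
  exact: rhs_weight_ucoef_base.
rewrite rhs_weight_ucoef_eq0 //; apply/orP; left.
apply: contra i_ne => /eqP i_eq; apply/eqP/val_inj => /=; lia.
Qed.

Lemma ratio_num_neq0 (j : nat) : (j < mu)%N -> ratio_num j != 0.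
Proof.
move=> j_lt; have factor_neq0 p : (j < p)%N -> 1 - q ^+ p / q ^+ j != 0.
  by move=> p_gt; rewrite -expfB // subr1qX_neq0 // subn_gt0.
by rewrite /ratio_num !mulf_neq0 ?factor_neq0 //; lia.
Qed.

Lemma rhs_coefE (j : nat) : rhs_coef j = lhs_coef j.
Proof.
have [j_gt|j_le] := ltnP mu j; first by rewrite rhs_coef_eq0 ?lhs_coef_eq0.
rewrite -(subKn j_le); elim: (mu - j)%N (leq_subr j mu) => [|d IHd] d_le.
  by rewrite subn0 rhs_coef_mu.
have j_lt : (mu - d.+1 < mu)%N by lia.
apply: (mulfI (ratio_num_neq0 _ j_lt)).
rewrite -rhs_coef_ratio -lhs_coef_ratio //.
have -> : (mu - d.+1).+1 = (mu - d)%N by lia.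
by rewrite IHd //; lia.
Qed.

Lemma rhs_term_usum (u : nat) (k : int) :
  rhs_term q e l m n u k = rhs_weight k * usum u M k.
Proof.
rewrite rhs_termE; have [k_lt|k_ge] := ltnP `|k| M; first by rewrite (ufactor_usum _ M).
by rewrite rhs_weight_eq0 ?mul0r //; lia.
Qed.

Lemma lhs_sum_eq_rhs_sum (u : nat) :
  \sum_(0 <= k < M) lhs_term q e l m n u k
  = \sum_(0 <= i < M + M + 1) rhs_term q e l m n u (i%:Z - M%:Z).
Proof.
rewrite addn1 addnn !big_mkord.
under eq_bigr => j _ do rewrite lhs_termE -rhs_coefE /rhs_coef mulr_suml.
rewrite exchange_big; apply: eq_bigr => i _.
by rewrite rhs_term_usum /usum mulr_sumr; apply: eq_bigr => j _; rewrite mulrA.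
Qed.

End CoefficientIdentity.

End QFactorial.

Lemma expr_neq1_normr_lt1 (R : numDomainType) (x : R) (n : nat) :
  `|x| < 1 -> (0 < n)%N -> x ^+ n != 1.
Proof.
move=> x_lt1 n_gt0; apply/eqP => /(congr1 Num.norm); rewrite normrX normr1 => xn_eq1.
by have := exprn_ilt1 n (normr_ge0 x) x_lt1; rewrite xn_eq1 ltxx -lt0n n_gt0.
Qed.

Theorem corollary5p4 (R : rcfType) (q : R[i]) (l m n u : nat) :
  0 < `|q| < 1 ->
  let N := (l + m + n + u).+1 in
  (\sum_(0 <= k < N) lhs_term q 0 l m n u k
     = \sum_(0 <= i < N + N + 1) rhs_term q 0 l m n u (i%:Z - N%:Z))
  /\
  (\sum_(0 <= k < N) lhs_term q 1 l m n u k
     = \sum_(0 <= i < N + N + 1) rhs_term q 1 l m n u (i%:Z - N%:Z)).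
Proof.
move=> /andP[q_gt0 q_lt1] N.
have q_neq0 : q != 0 by rewrite -normr_gt0.
have qX_neq1 k : (0 < k)%N -> q ^+ k != 1 by exact: expr_neq1_normr_lt1.
have two_neq0 : 2%:R != 0 :> R[i] by rewrite pnatr_eq0.
have l_lt_N : (l < N)%N by rewrite /N; lia.
by split; apply: lhs_sum_eq_rhs_sum.
Qed.
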